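(* Let $\Lambda$ be a lattice of rank $n$, $U=\Lambda\otimes\mathbb{R}$, and let $X\subset\Lambda$ be a linearly independent list forming a basis of $U$. For $A\subseteq X$ let $h(A)$ be the number of points of $\Lambda$ that are internal to the face $\mathcal{Z}(A)$ of the parallelepiped $\mathcal{Z}(X)$. Then for every $A\subseteq X$, $$h(A)=\sum_{B\subseteq A}(-1)^{|A|-|B|}m(B).$$
   Context: For a list $Y$, $\mathcal{Z}(Y)=\{\sum_{y\in Y}t_y y: 0\le t_y\le 1\}$; when $X$ is a basis, $\mathcal{Z}(X)$ is a parallelepiped and $\mathcal{Z}(A)$ is a face of it for each $A\subseteq X$ ($\mathcal{Z}(\emptyset)=\{0\}$). A point $p\in\Lambda\cap\mathcal{Z}(X)$ is internal to a face $F$ of $\mathcal{Z}(X)$ if $F$ is the smallest face of $\mathcal{Z}(X)$ containing $p$. For $B\subseteq X$, $m(B)=[\Lambda\cap\langle B\rangle_{\mathbb{R}}:\langle B\rangle_{\mathbb{Z}}]$, where $\langle B\rangle_{\mathbb{R}}$ and $\langle B\rangle_{\mathbb{Z}}$ are the real span and the subgroup generated by $B$. *)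

From HB Require Import structures.
From mathcomp Require Import all_boot all_order all_algebra.
From mathcomp Require Import reals.
Set Implicit Arguments. Unset Strict Implicit. Unset Printing Implicit Defensive.
Import Order.TTheory GRing.Theory Num.Theory.
Local Open Scope ring_scope.

Section Defs.
Variables (R : realType) (n : nat).

(* The lattice Lambda = { z *m L : z integer row vector }, L invertible;
   U = Lambda (x) R is identified with 'rV[R]_n. *)
Definition inLat (L : 'M[R]_n) (v : 'rV[R]_n) : Prop :=
  exists z : 'rV[int]_n, v = map_mx (fun k : int => k%:~R) z *m L.

Definition dotr (u v : 'rV[R]_n) : R := (u *m v^T) 0 0.

Definition Zono (X : 'I_n -> 'rV[R]_n) (A : {set 'I_n}) (p : 'rV[R]_n) : Prop :=
  exists t : 'I_n -> R, (forall i, 0 <= t i <= 1) /\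
    p = \sum_(i in A) t i *: X i.

Definition isFace (X : 'I_n -> 'rV[R]_n) (F : 'rV[R]_n -> Prop) : Prop :=
  exists w : 'rV[R]_n, forall p,
    F p <-> (Zono X setT p /\ forall q, Zono X setT q -> dotr q w <= dotr p w).

(* p is internal to the face Z(A): Z(A) is the smallest face containing p *)
Definition internal (X : 'I_n -> 'rV[R]_n) (A : {set 'I_n}) (p : 'rV[R]_n) : Prop :=
  isFace X (Zono X A) /\ Zono X A p /\
  forall F, isFace X F -> F p -> forall q, Zono X A q -> F q.

Definition realSpan (X : 'I_n -> 'rV[R]_n) (B : {set 'I_n}) (v : 'rV[R]_n) : Prop :=
  exists t : 'I_n -> R, v = \sum_(i in B) t i *: X i.

Definition intSpan (X : 'I_n -> 'rV[R]_n) (B : {set 'I_n}) (v : 'rV[R]_n) : Prop :=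
  exists t : 'I_n -> int, v = \sum_(i in B) (t i)%:~R *: X i.

Definition group_index (G H : 'rV[R]_n -> Prop) (k : nat) : Prop :=
  exists s : seq 'rV[R]_n,
    [/\ size s = k, uniq s, (forall x, x \in s -> G x),
        (forall x y, x \in s -> y \in s -> H (x - y) -> x = y) &
        (forall g, G g -> exists2 x, x \in s & H (g - x))].

Definition m_index (L : 'M[R]_n) (X : 'I_n -> 'rV[R]_n) (B : {set 'I_n}) (k : nat) : Prop :=
  group_index (fun v => inLat L v /\ realSpan X B v) (intSpan X B) k.

End Defs.

From HB Require Import structures.
From mathcomp Require Import all_boot all_order all_algebra.
From mathcomp Require Import reals.
From mathcomp Require Import zify lra.
Set Implicit Arguments. Unset Strict Implicit. Unset Printing Implicit Defensive.
Import Order.TTheory GRing.Theory Num.Theory.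
Local Open Scope ring_scope.

(* In the coordinates of the basis X, a point of Z(X) lies in the relative
   interior of the face Z(A) iff its coordinates are in (0,1) on A and vanish off
   A, and the lattice points with coordinates in [0,1) on B and 0 off B form a
   system of representatives of the cosets of <B>_Z in Lambda cap <B>_R, so there
   are m(B) of them.  Writing the indicator of (0,1) as that of [0,1) minus that
   of {0} and expanding the product over the coordinates gives, for every point,
   [x internal to Z(A)] = sum_(B <= A) (-1)^(|A|-|B|) [x in [0,1)^B]; summing
   over the finitely many lattice points of Z(X) yields the formula. *)


Lemma prod_subr_subsets (R : comPzRingType) (I : finType) (A : {set I}) (p z : I -> R) :
  \prod_i (if i \in A then p i - z i else z i) =
  \sum_(B : {set I} | B \subset A)
     (-1) ^+ (#|A| - #|B|) * \prod_i (if i \in B then p i else z i).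
Proof.
pose F i := if i \in A then p i else 0.
pose G i := if i \in A then - z i else z i.
transitivity (\prod_i (F i + G i)).
  by apply: eq_bigr => i _; rewrite /F /G; case: ifP; rewrite ?add0r.
rewrite bigA_distr [RHS]big_mkcond /=; apply: eq_big => // B _.
case: ifP => [BA | /negbT /subsetPn[i iB iA]]; last first.
  by rewrite (bigD1 i) //= iB /F (negbTE iA) mul0r.
have -> : (#|A| - #|B|)%N = #|A :\: B| by rewrite cardsD (setIidPr BA).
rewrite -prodr_const [in RHS]big_mkcond -big_split /=; apply: eq_bigr => i _.
rewrite /F /G !inE; case: (boolP (i \in B)) => iB /=.
  by rewrite (subsetP BA i iB) mul1r.
by case: (i \in A); rewrite ?mulN1r ?mul1r.
Qed.

Lemma natr_forallE (R : comPzSemiRingType) (I : finType) (P : pred I) :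
  [forall i, P i]%:R = \prod_i (P i)%:R :> R.
Proof.
case: (boolP [forall i, P i]) => [/forallP allP | /forallPn[i Pi]].
  by rewrite big1 // => i _; rewrite allP.
by rewrite (bigD1 i) //= (negbTE Pi) mul0r.
Qed.

Lemma count_sumE (T : eqType) (a : pred T) (s : seq T) :
  (count a s)%:Z = \sum_(x <- s) (a x)%:Z.
Proof. by elim: s => [|x s IH]; rewrite ?big_nil ?big_cons //= PoszD IH. Qed.

Section Coordinates.
Variables (R : realType) (n : nat) (X : 'I_n -> 'rV[R]_n).

Let M := \matrix_(i < n) X i.

Fact coord_key : unit. Proof. exact: tt. Qed.
(* Locked so that [mxE] does not unfold it into a sum. *)
Definition coord (p : 'rV[R]_n) : 'rV[R]_n := locked_with coord_key (p *m invmx M).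

Definition coord_dot (p b : 'rV[R]_n) : R := \sum_i coord p 0 i * b 0 i.

Definition argmax_face (b p : 'rV[R]_n) : Prop :=
  Zono X setT p /\ forall q, Zono X setT q -> coord_dot q b <= coord_dot p b.

Hypothesis X_free : row_free M.

Let M_unit : M \in unitmx. Proof. by rewrite -row_free_unit. Qed.

Lemma coordE p : coord p = p *m invmx M. Proof. by rewrite /coord unlock. Qed.
Lemma coordK p : coord p *m M = p. Proof. by rewrite coordE mulmxKV. Qed.
Lemma coord_mulmx c : coord (c *m M) = c. Proof. by rewrite coordE mulmxK. Qed.
Lemma coord_inj : injective coord.
Proof. by move=> p q e; rewrite -(coordK p) e coordK. Qed.
Lemma coord0 : coord 0 = 0. Proof. by rewrite coordE mul0mx. Qed.
Lemma coordB p q : coord (p - q) = coord p - coord q.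
Proof. by rewrite !coordE mulmxBl. Qed.

Lemma coord_sum (A : {set 'I_n}) (t : 'I_n -> R) :
  coord (\sum_(i in A) t i *: X i) = \row_i (if i \in A then t i else 0).
Proof.
rewrite -[RHS]coord_mulmx; congr coord.
rewrite mulmx_sum_row big_mkcond /=; apply: eq_bigr => i _.
by rewrite mxE rowK; case: ifP => _ //; rewrite scale0r.
Qed.

Lemma coordX i : coord (X i) = \row_j (if j == i then 1 else 0).
Proof.
have := coord_sum [set i] (fun=> 1); rewrite big_set1 /= scale1r => ->.
by apply/rowP => j; rewrite !mxE inE.
Qed.

Lemma ZonoP (A : {set 'I_n}) p : Zono X A p <->
  forall i, 0 <= coord p 0 i <= 1 /\ (i \notin A -> coord p 0 i = 0).
Proof.
split=> [[t [t01 ->]] i | p01].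
  rewrite coord_sum mxE; case: ifP => iA; last by rewrite lexx ler01.
  by split=> //; apply: t01.
exists (coord p 0); split=> [i|]; first by case: (p01 i).
apply: coord_inj; rewrite coord_sum; apply/rowP => i; rewrite mxE.
by case: ifP => // /negbT /(p01 i).2.
Qed.

Lemma Zono_setTP p : Zono X setT p <-> forall i, 0 <= coord p 0 i <= 1.
Proof.
split=> [/ZonoP p01 i | p01]; first by case: (p01 i).
by apply/ZonoP => i; split; [exact: p01 | rewrite in_setT].
Qed.

Lemma Zono_setT (A : {set 'I_n}) p : Zono X A p -> Zono X setT p.
Proof. by move/ZonoP => p01; apply/Zono_setTP => i; case: (p01 i). Qed.

Lemma Zono0 (A : {set 'I_n}) : Zono X A 0.
Proof. by apply/ZonoP => i; rewrite coord0 mxE lexx ler01. Qed.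

Lemma Zono_X (A : {set 'I_n}) i : i \in A -> Zono X A (X i).
Proof.
move=> iA; apply/ZonoP => j; rewrite coordX mxE; split=> [|jA].
  by case: ifP => _; rewrite ?lexx ?ler01.
by move: jA; case: (eqVneq j i) => [->|] //; rewrite iA.
Qed.

Lemma realSpanP (B : {set 'I_n}) v :
  realSpan X B v <-> forall i, i \notin B -> coord v 0 i = 0.
Proof.
split=> [[t ->] i /negbTE iB | v0]; first by rewrite coord_sum mxE iB.
exists (coord v 0); apply: coord_inj; rewrite coord_sum; apply/rowP => i.
by rewrite mxE; case: ifP => // /negbT /v0.
Qed.

Lemma dotr_coord p w : dotr p w = coord_dot p (w *m M^T).
Proof.
rewrite /dotr /coord_dot -{1}(coordK p) -mulmxA -[M *m w^T]trmxK trmx_mul trmxK mxE.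
by apply: eq_bigr => i _; rewrite mxE.
Qed.

Lemma isFaceP F : isFace X F <-> exists b, forall p, F p <-> argmax_face b p.
Proof.
have dotr_coordK b q : dotr q (b *m invmx M^T) = coord_dot q b.
  by rewrite dotr_coord mulmxKV // unitmx_tr M_unit.
split=> [[w Fw] | [b Fb]].
  exists (w *m M^T) => p; split=> [/Fw[Zp maxp] | [Zp maxp]]; [|apply/Fw];
    split=> // q Zq.
    by rewrite -!dotr_coord; apply: maxp.
  by rewrite !dotr_coord; apply: maxp.
exists (b *m invmx M^T) => p; split=> [/Fb[Zp maxp] | [Zp maxp]]; [|apply/Fb];
  split=> // q Zq.
  by rewrite !dotr_coordK; apply: maxp.
by rewrite -!dotr_coordK; apply: maxp.
Qed.

Lemma isFace_argmax b : isFace X (argmax_face b).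
Proof. by apply/isFaceP; exists b. Qed.

Lemma coord_dot_delta q i x :
  coord_dot q (\row_k (if k == i then x else 0)) = coord q 0 i * x.
Proof.
rewrite /coord_dot (bigD1 i) //= mxE eqxx big1 ?addr0 // => j /negbTE ji.
by rewrite mxE ji mulr0.
Qed.

Lemma coord_dot_update p b i x :
  coord_dot ((\row_k (if k == i then x else coord p 0 k)) *m M) b
  = coord_dot p b + (x - coord p 0 i) * b 0 i.
Proof.
rewrite /coord_dot coord_mulmx (bigD1 i) //= [in RHS](bigD1 i) //= mxE eqxx.
rewrite (eq_bigr (fun j => coord p 0 j * b 0 j)) => [|j /negbTE ji]; last by rewrite mxE ji.
by rewrite mulrBl; lra.
Qed.

(* Moving the i-th coordinate of a maximiser to 0 or to 1 must not increase
   the functional, which forces its i-th weight to vanish. *)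
Lemma argmax_face_coord_eq0 b p i :
  argmax_face b p -> 0 < coord p 0 i < 1 -> b 0 i = 0.
Proof.
move=> [/Zono_setTP p01 maxp] /andP[ci_gt0 ci_lt1].
have upd_le x : 0 <= x <= 1 -> (x - coord p 0 i) * b 0 i <= 0.
  move=> x01.
  suff /maxp : Zono X setT ((\row_k (if k == i then x else coord p 0 k)) *m M).
    by rewrite coord_dot_update; lra.
  by apply/Zono_setTP => j; rewrite coord_mulmx mxE; case: ifP => // _; apply: p01.
have := upd_le 0; have := upd_le 1; rewrite !lexx ler01 => /(_ isT) le1 /(_ isT) le0.
nra.
Qed.

Lemma face_Zono (A : {set 'I_n}) : isFace X (Zono X A).
Proof.
pose b : 'rV[R]_n := \row_i (if i \in A then 0 else -1).
have dot_b q : coord_dot q b = - \sum_(i | i \notin A) coord q 0 i.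
  rewrite /coord_dot (bigID (mem A)) /= big1 => [|i iA]; last by rewrite mxE iA mulr0.
  by rewrite add0r -sumrN; apply: eq_bigr => i /negbTE iA; rewrite mxE iA mulrN1.
apply/isFaceP; exists b => p; split=> [Ap | [Zp maxp]].
  split=> [|q /Zono_setTP q01]; first exact: Zono_setT Ap.
  move/ZonoP: Ap => p01; rewrite !dot_b.
  have -> : \sum_(i | i \notin A) coord p 0 i = 0 by apply: big1 => i /(p01 i).2.
  by rewrite oppr0 oppr_le0; apply: sumr_ge0 => i _; case/andP: (q01 i).
move/Zono_setTP: (Zp) => p01.
have c_ge0 i : 0 <= coord p 0 i by case/andP: (p01 i).
have := maxp 0 (Zono0 _); rewrite !dot_b coord0 big1 => [le|i _]; last by rewrite mxE.
have Sge0 : 0 <= \sum_(i | i \notin A) coord p 0 i by apply: sumr_ge0.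
have S0 : \sum_(i | i \notin A) coord p 0 i = 0 by lra.
by apply/ZonoP => i; split; [apply: p01 | apply: (psumr_eq0P (fun j _ => c_ge0 j) S0)].
Qed.

(* Otherwise the face maximising -c_i contains p but not X i. *)
Lemma internal_coord_gt0 (A : {set 'I_n}) p i :
  internal X A p -> i \in A -> 0 < coord p 0 i.
Proof.
move=> [_ [Ap minp]] iA; have [c_ge0 _] := andP ((ZonoP A p).1 Ap i).1.
rewrite lt_def c_ge0 andbT; apply/eqP => c0.
have Fp : argmax_face (\row_k (if k == i then -1 else 0)) p.
  split=> [|q /Zono_setTP q01]; first exact: Zono_setT Ap.
  by rewrite !coord_dot_delta c0; case/andP: (q01 i); lra.
have [_ /(_ 0 (Zono0 _)) le] := minp _ (isFace_argmax _) Fp _ (Zono_X iA).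
by move: le; rewrite !coord_dot_delta coord0 coordX !mxE eqxx; lra.
Qed.

(* Otherwise the face maximising c_i contains p but not 0. *)
Lemma internal_coord_lt1 (A : {set 'I_n}) p i : internal X A p -> coord p 0 i < 1.
Proof.
move=> [_ [Ap minp]]; have [_ c_le1] := andP ((ZonoP A p).1 Ap i).1.
rewrite lt_def c_le1 andbT; apply/eqP => /esym c1.
have Fp : argmax_face (\row_k (if k == i then 1 else 0)) p.
  split=> [|q /Zono_setTP q01]; first exact: Zono_setT Ap.
  by rewrite !coord_dot_delta c1; case/andP: (q01 i); lra.
have [_ /(_ _ (Zono_X (in_setT i))) le] := minp _ (isFace_argmax _) Fp _ (Zono0 A).
by move: le; rewrite !coord_dot_delta coord0 coordX !mxE eqxx; lra.
Qed.

Definition open_face (A : {set 'I_n}) p : bool :=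
  [forall i, if i \in A then 0 < coord p 0 i < 1 else coord p 0 i == 0].

Definition halfopen_face (B : {set 'I_n}) p : bool :=
  [forall i, if i \in B then 0 <= coord p 0 i < 1 else coord p 0 i == 0].

Lemma Zono_open_face A p : open_face A p -> Zono X A p.
Proof.
move/forallP => Ap; apply/ZonoP => i; have := Ap i.
case: ifP => iA; last by move/eqP ->; rewrite lexx ler01.
by case/andP => /ltW -> /ltW ->.
Qed.

Lemma internalP A p : internal X A p <-> open_face A p.
Proof.
split=> [intp | Ap].
  have [_ [/ZonoP Zp _]] := intp.
  apply/forallP => i; case: ifP => iA.
    by rewrite (internal_coord_gt0 intp iA) (internal_coord_lt1 i intp).
  by apply/eqP; apply: (Zp i).2; rewrite iA.
split; [exact: face_Zono | split; first exact: Zono_open_face].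
move=> F /isFaceP[b Fb] /Fb[Zp maxp] q Aq; apply/Fb.
have b0 i : i \in A -> b 0 i = 0.
  move=> iA; apply: (@argmax_face_coord_eq0 b p i (conj Zp maxp)).
  by move/forallP/(_ i): Ap; rewrite iA.
have dot0 r : Zono X A r -> coord_dot r b = 0.
  move/ZonoP => Ar; rewrite /coord_dot big1 // => i _.
  by case: (boolP (i \in A)) => iA; [rewrite b0 // mulr0 | rewrite (Ar i).2 // mul0r].
split=> [|r Zr]; first exact: Zono_setT Aq.
by rewrite (dot0 q Aq) -(dot0 p (Zono_open_face Ap)); apply: maxp.
Qed.

Lemma halfopen_face_Zono B p : halfopen_face B p -> Zono X setT p.
Proof.
move/forallP => Bp; apply/Zono_setTP => i; have := Bp i.
by case: ifP => _ => [/andP[-> /ltW ->] | /eqP ->]; rewrite ?lexx ?ler01.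
Qed.

Lemma halfopen_face_realSpan B p : halfopen_face B p -> realSpan X B p.
Proof.
move/forallP => Bp; apply/realSpanP => i iB.
by move: (Bp i); rewrite (negbTE iB) => /eqP.
Qed.

Lemma intr_eq0_of_itv (k : int) : -1 < k%:~R :> R -> k%:~R < 1 :> R -> k = 0.
Proof.
move=> k_gtN1; rewrite ltrz1.
have e : ((-1 : int)%:~R : R) = -1 by rewrite intrN.
by move: k_gtN1; rewrite -e ltr_int; lia.
Qed.

Lemma halfopen_face_eq B x y :
  halfopen_face B x -> halfopen_face B y -> intSpan X B (x - y) -> x = y.
Proof.
move=> /forallP Bx /forallP By [t xy]; apply: coord_inj; apply/rowP => i.
have := congr1 (fun v => coord v 0 i) xy; rewrite /= coordB coord_sum !mxE.
move: (Bx i) (By i); case: ifP => _; last by move=> /eqP -> /eqP ->.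
move=> /andP[x0 x1] /andP[y0 y1] e.
have ti0 : t i = 0 by apply: intr_eq0_of_itv; rewrite -e; lra.
by move: e; rewrite ti0 mulr0z; lra.
Qed.

Lemma halfopen_face_floor B g : realSpan X B g ->
  exists t : 'I_n -> int, halfopen_face B (g - \sum_(i in B) (t i)%:~R *: X i).
Proof.
move/realSpanP => g0; exists (fun i => Num.floor (coord g 0 i)); apply/forallP => i.
rewrite coordB coord_sum !mxE; case: ifP => iB; last by rewrite ?iB subr0 g0 ?iB.
have /andP[fl_le lt_fl1] := floor_itv (coord g 0 i).
by rewrite intrD mulr1z in lt_fl1; rewrite iB; apply/andP; split; lra.
Qed.

Lemma open_face_incl_excl A p :
  (open_face A p)%:Z = \sum_(B : {set 'I_n} | B \subset A)
     (-1) ^+ (#|A| - #|B|) * (halfopen_face B p)%:Z.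
Proof.
have open_factor i :
    (if i \in A then 0 < coord p 0 i < 1 else coord p 0 i == 0)%R%:R =
    if i \in A then (0 <= coord p 0 i < 1)%R%:R - (coord p 0 i == 0)%:R
    else (coord p 0 i == 0)%:R :> int.
  case: ifP => // _; case: (eqVneq (coord p 0 i) 0) => [->|c0] /=.
    by rewrite ltxx lexx ltr01 /= subrr.
  by rewrite lt_def c0 /= subr0.
rewrite -natz natr_forallE (eq_bigr _ (fun i _ => open_factor i)) prod_subr_subsets.
apply: eq_bigr => B _; rewrite -natz natr_forallE; congr (_ * _).
by apply: eq_bigr => i _; case: ifP.
Qed.

Lemma count_open_face_incl_excl A (s : seq 'rV[R]_n) :
  (count (open_face A) s)%:Z = \sum_(B : {set 'I_n} | B \subset A)
     (-1) ^+ (#|A| - #|B|) * (count (halfopen_face B) s)%:Z.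
Proof.
rewrite count_sumE (eq_bigr _ (fun p _ => open_face_incl_excl A p)) exchange_big /=.
by apply: eq_bigr => B _; rewrite count_sumE mulr_sumr.
Qed.

End Coordinates.

Section Lattice.
Variables (R : realType) (n : nat) (L : 'M[R]_n).

Lemma inLat0 : inLat L 0.
Proof.
exists 0; have -> : map_mx (fun k : int => k%:~R) 0 = 0 :> 'rV[R]_n.
  by apply/matrixP => a b; rewrite !mxE.
by rewrite mul0mx.
Qed.

Lemma inLatD u v : inLat L u -> inLat L v -> inLat L (u + v).
Proof.
move=> [zu ->] [zv ->]; exists (zu + zv); rewrite -mulmxDl; congr (_ *m _).
by apply/matrixP => a b; rewrite !mxE intrD.
Qed.

Lemma inLatN v : inLat L v -> inLat L (- v).
Proof.
move=> [z ->]; exists (- z); rewrite -mulNmx; congr (_ *m _).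
by apply/matrixP => a b; rewrite !mxE intrN.
Qed.

Lemma inLat_int_comb (X : 'I_n -> 'rV[R]_n) (B : {set 'I_n}) (t : 'I_n -> int) :
  (forall i, inLat L (X i)) -> inLat L (\sum_(i in B) (t i)%:~R *: X i).
Proof.
move=> X_lat; apply: big_ind => [|u v|i _]; [exact: inLat0 | exact: inLatD |].
have [z ->] := X_lat i; exists (t i *: z); rewrite scalemxAl; congr (_ *m _).
by apply/matrixP => a b; rewrite !mxE intrM.
Qed.

End Lattice.

Lemma bounded_int_rows_finite (n K : nat) :
  exists s : seq 'rV[int]_n, forall z : 'rV[int]_n, (forall j, `|z 0 j| <= K%:Z) -> z \in s.
Proof.
exists [seq \row_j ((f j : nat)%:Z - K%:Z)
         | f : {ffun 'I_n -> 'I_(K + K).+1} <- enum {ffun 'I_n -> 'I_(K + K).+1}].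
move=> z zK; apply/mapP; exists [ffun j => inord (absz (z 0 j + K%:Z))].
  by rewrite mem_enum.
apply/matrixP => i j; rewrite (ord1 i) !mxE ffunE.
have := zK j; rewrite ler_norml; move: (z 0 j) => w /andP[w_ge w_le].
by rewrite inordK; lia.
Qed.

Section LatticePoints.
Variables (R : realType) (n : nat) (L : 'M[R]_n) (X : 'I_n -> 'rV[R]_n).
Hypotheses (L_unit : L \in unitmx) (X_free : row_free (\matrix_(i < n) X i)).

Lemma inLat_Zono_bounded : exists K : nat, forall x, inLat L x -> Zono X setT x ->
  exists2 z : 'rV[int]_n,
    x = map_mx (fun k : int => k%:~R) z *m L & forall j, `|z 0 j| <= K%:Z.
Proof.
pose N := \matrix_(i < n) X i *m invmx L.
pose S := \sum_j \sum_i `|N i j|.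
have S_ge0 : 0 <= S by apply: sumr_ge0 => j _; apply: sumr_ge0.
exists (Num.bound S) => x [z xE] /(Zono_setTP X_free) x01; exists z => // j.
have zE : map_mx (fun k : int => k%:~R) z = coord X x *m N.
  by rewrite /N mulmxA coordK // xE mulmxK.
rewrite -(ler_int R) intr_norm.
have -> : (z 0 j)%:~R = (coord X x *m N) 0 j by rewrite -zE mxE.
apply: le_trans (ltW (archi_boundP S_ge0)).
rewrite mxE; apply: le_trans (ler_norm_sum _ _ _) _.
apply: (@le_trans _ _ (\sum_i `|N i j|)).
  apply: ler_sum => i _; rewrite normrM; apply: ler_piMl => //.
  by have /andP[c0 c1] := x01 i; rewrite ger0_norm.
by rewrite /S [X in _ <= X](bigD1 j) //= lerDl; apply: sumr_ge0 => k _; apply: sumr_ge0.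
Qed.

Lemma lattice_Zono_finite : exists s : seq 'rV[R]_n,
  uniq s /\ forall x, x \in s <-> inLat L x /\ Zono X setT x.
Proof.
have [K boundK] := inLat_Zono_bounded.
have [zs zsK] := bounded_int_rows_finite n K.
pose inZ (x : 'rV[R]_n) := [forall i, 0 <= coord X x 0 i <= 1].
exists (undup [seq x <- [seq map_mx (fun k : int => k%:~R) z *m L | z <- zs] | inZ x]).
split=> [|x]; first exact: undup_uniq.
rewrite mem_undup mem_filter; split=> [/andP[/forallP x01 /mapP[z _ xE]] | [xL Zx]].
  by split; [exists z | apply/(Zono_setTP X_free)].
have [z xE zK] := boundK x xL Zx.
apply/andP; split; first by apply/forallP; apply/(Zono_setTP X_free).
by apply/mapP; exists z => //; apply: zsK.
Qed.

End LatticePoints.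

Section Counting.
Variables (R : realType) (n : nat) (L : 'M[R]_n) (X : 'I_n -> 'rV[R]_n).
Hypotheses (X_lat : forall i, inLat L (X i)) (X_free : row_free (\matrix_(i < n) X i)).
Variable s : seq 'rV[R]_n.
Hypotheses (s_uniq : uniq s) (s_mem : forall x, x \in s <-> inLat L x /\ Zono X setT x).

Lemma m_index_count B : m_index L X B (count (halfopen_face X B) s).
Proof.
exists (filter (halfopen_face X B) s); split.
- exact: size_filter.
- exact: filter_uniq.
- move=> x; rewrite mem_filter => /andP[Bx /s_mem[xL _]].
  by split=> //; apply: halfopen_face_realSpan X_free _ _ Bx.
- move=> x y; rewrite !mem_filter => /andP[Bx _] /andP[By _].
  exact: halfopen_face_eq X_free _ _ _ Bx By.
move=> g [gL /(halfopen_face_floor X_free)[t Bgt]].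
exists (g - \sum_(i in B) (t i)%:~R *: X i); last by exists t; rewrite opprB addrC subrK.
rewrite mem_filter Bgt; apply/s_mem; split; last exact: halfopen_face_Zono X_free _ _ Bgt.
exact: inLatD gL (inLatN (inLat_int_comb _ _ X_lat)).
Qed.

Lemma mem_filter_open_face A p :
  p \in filter (open_face X A) s <-> inLat L p /\ internal X A p.
Proof.
rewrite mem_filter; split=> [/andP[Ap /s_mem[pL _]] | [pL /(internalP X_free) Ap]].
  by split=> //; apply/(internalP X_free).
by rewrite Ap; apply/s_mem; split=> //; apply: Zono_setT X_free _ _ (Zono_open_face X_free Ap).
Qed.

End Counting.

Theorem lemma4p3 (R : realType) (n : nat) (L : 'M[R]_n) (X : 'I_n -> 'rV[R]_n) :
  L \in unitmx ->
  (forall i, inLat L (X i)) ->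
  row_free (\matrix_(i < n) X i) ->
  forall A : {set 'I_n},
  exists (m : {set 'I_n} -> nat) (s : seq 'rV[R]_n),
    [/\ (forall B, m_index L X B (m B)),
        uniq s,
        (forall p, p \in s <-> (inLat L p /\ internal X A p)) &
        (size s)%:Z = \sum_(B : {set 'I_n} | B \subset A)
                        (-1) ^+ (#|A| - #|B|) * (m B)%:Z].
Proof.
move=> L_unit X_lat X_free A.
have [s [s_uniq s_mem]] := lattice_Zono_finite L_unit X_free.
exists (fun B => count (halfopen_face X B) s), (filter (open_face X A) s); split.
- exact: m_index_count.
- exact: filter_uniq.
- exact: mem_filter_open_face.
- by rewrite size_filter count_open_face_incl_excl.
Qed.
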